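(* Let $p\ge1$, $\mathbf m=(m_1,\ldots,m_p)\in\mathbb N^p$, $n\in\mathbb N$, $x\in\mathbb C$ with $0<|x|\le1$, and $\sigma_1,\ldots,\sigma_p\in\mathbb C$ with $0<|\sigma_j|<1$. Put $\sigma_{p+1}:=1/x$. Then \[ n\int_0^x t^{n-1}dt\,\frac{dt}{1-\sigma_1t}\Big(\frac{dt}{t}\Big)^{m_1-1}\cdots\frac{dt}{1-\sigma_pt}\Big(\frac{dt}{t}\Big)^{m_p-1} =\sum_{j=0}^{p}(-1)^j\,\frac{\zeta^\star_n\big(m_1,\ldots,m_j;\tfrac{\sigma_1}{\sigma_2},\ldots,\tfrac{\sigma_j}{\sigma_{j+1}}\big)\,\mathrm{Li}_{m_p,m_{p-1},\ldots,m_{j+1}}\big(\sigma_px,\tfrac{\sigma_{p-1}}{\sigma_p},\ldots,\tfrac{\sigma_{j+1}}{\sigma_{j+2}}\big)}{\sigma_1^{n+1}\sigma_2\cdots\sigma_p}, \] where for $j=0$ the $\zeta^\star_n$ factor is $1$ and for $j=p$ the $\mathrm{Li}$ factor is $1$.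
   Context: Iterated integrals: $\int_a^b f_q(t)dt\cdots f_1(t)dt:=\int_{a<t_q<\cdots<t_1<b}f_q(t_q)\cdots f_1(t_1)\,dt_1\cdots dt_q$, along the straight segment for complex endpoints. $\zeta^\star_n(\mathbf k;\mathbf x)=\sum_{n\ge n_1\ge\cdots\ge n_r\ge1}\prod_i x_i^{n_i}/n_i^{k_i}$, $\zeta^\star_n(\emptyset)=1$. Multiple polylogarithm: $\mathrm{Li}_{k_1,\ldots,k_r}(x_1,\ldots,x_r)=\sum_{n_1>\cdots>n_r>0}x_1^{n_1}\cdots x_r^{n_r}/(n_1^{k_1}\cdots n_r^{k_r})$, $\mathrm{Li}_\emptyset=1$. *)

From Stdlib Require Import Reals List.
From Coquelicot Require Import Coquelicot.
Open Scope C_scope.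

Definition line_int (g : C -> C) (a b : C) : C :=
  (b - a) * RInt (V := C_R_CompleteNormedModule)
                 (fun s : R => g (a + RtoC s * (b - a))) 0%R 1%R.

(* Iterated integral from 0, forms listed OUTERMOST first:
   itint_out [f_1; ...; f_q] u = int_{0 < t_q < ... < t_1 < u} f_q(t_q) ... f_1(t_1). *)
Fixpoint itint_out (fs : list (C -> C)) (u : C) : C :=
  match fs with
  | nil => 1
  | f :: fs' => line_int (fun t => f t * itint_out fs' t) 0 u
  end.

(* Paper's notation: int_0^u f_q(t)dt ... f_1(t)dt, forms listed left to right
   (innermost, i.e. smallest variable, first). *)
Definition itint (fs : list (C -> C)) (u : C) : C := itint_out (rev fs) u.

Definition lsum (f : nat -> C) (l : list nat) : C := fold_right Cplus 0 (map f l).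
Definition lprod (f : nat -> C) (l : list nat) : C := fold_right Cmult 1 (map f l).

(* zeta-star truncated: zstar n [(k1,x1);...;(kr,xr)]
   = sum_{n >= n1 >= ... >= nr >= 1} prod x_i^{n_i} / n_i^{k_i}; zstar n [] = 1. *)
Fixpoint zstar (n : nat) (kx : list (nat * C)) : C :=
  match kx with
  | nil => 1
  | (k, y) :: r =>
      lsum (fun n1 => Cpow y n1 / Cpow (RtoC (INR n1)) k * zstar n1 r) (seq 1 n)
  end.

(* Truncated multiple polylog: sum over N >= n1 > ... > nr > 0. *)
Fixpoint LiN (N : nat) (kx : list (nat * C)) : C :=
  match kx with
  | nil => 1
  | (k, y) :: r =>
      lsum (fun n1 => Cpow y n1 / Cpow (RtoC (INR n1)) k * LiN (n1 - 1) r) (seq 1 N)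
  end.

Definition Li (kx : list (nat * C)) : C :=
  (real (Lim_seq (fun N => fst (LiN N kx))), real (Lim_seq (fun N => snd (LiN N kx)))).

From Stdlib Require Import Reals List Arith Lia Lra ClassicalEpsilon FunctionalExtensionality.
From Coquelicot Require Import Coquelicot.
Open Scope C_scope.

(* Both sides of the identity are shown to be the sum of the same power series in x.
   1. Analytic part.  An absolutely summable coefficient sequence c with c_0 = 0
      [represents] a function on the closed unit disc.  Multiplying by 1/(1 - s t)
      (a Cauchy product with the geometric series) or by 1/t (a shift), and then
      integrating along [0, u] (term by term, by uniform convergence on the segment),
      yields again such a sequence.  Hence n times the iterated integral is
      sum_N n block_coef_p(N) x^N, where block_coef is built block by block by
      convolution operators [blockc].
   2. Algebraic part.  By induction on p, the coefficients have a closed form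
      [closed_form]: n sigma_1^(n+1) sigma_2 ... sigma_p block_coef_p(N) is the sum over
      j < p of (-1)^j zeta*_n(m_1..m_j) times the N-th term of the series defining
      Li_{m_p..m_(j+1)}, plus a term supported on N <= n.
   3. Assembly.  Summing against x^N, the j-th piece gives the j-th summand of the
      right-hand side ([Li_series]), the last piece is the finite sum
      zeta*_n(m_1..m_p; ..., sigma_p x), and uniqueness of limits concludes. *)

Lemma lsum_nil (f : nat -> C) : lsum f nil = 0.
Proof. reflexivity. Qed.

Lemma lsum_cons (f : nat -> C) a l : lsum f (a :: l) = f a + lsum f l.
Proof. reflexivity. Qed.

Lemma lsum_app (f : nat -> C) l1 l2 : lsum f (l1 ++ l2) = lsum f l1 + lsum f l2.
Proof.
induction l1 as [|a l1 IH]; simpl.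
- rewrite lsum_nil. ring.
- rewrite !lsum_cons, IH. ring.
Qed.

Lemma lsum_ext_in (f g : nat -> C) l :
  (forall i, In i l -> f i = g i) -> lsum f l = lsum g l.
Proof.
induction l as [|a l IH]; intros H; [reflexivity|].
rewrite !lsum_cons, H by (left; auto). rewrite IH; [reflexivity|].
intros; apply H; right; auto.
Qed.

Lemma lsum_zero (f : nat -> C) l : (forall i, In i l -> f i = 0) -> lsum f l = 0.
Proof.
induction l as [|a l IH]; intros H; [reflexivity|].
rewrite lsum_cons, H by (left; auto). rewrite IH; [ring|].
intros; apply H; right; auto.
Qed.

Lemma lsum_scal (c : C) (f : nat -> C) l : c * lsum f l = lsum (fun i => c * f i) l.
Proof. induction l as [|a l IH]; [unfold lsum; simpl; ring|]. rewrite !lsum_cons, <- IH. ring. Qed.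

Lemma lsum_scal_r (c : C) (f : nat -> C) l : lsum f l * c = lsum (fun i => f i * c) l.
Proof. rewrite Cmult_comm, lsum_scal. apply lsum_ext_in; intros; ring. Qed.

Lemma lsum_plus (f g : nat -> C) l : lsum (fun i => f i + g i) l = lsum f l + lsum g l.
Proof. induction l as [|a l IH]; [unfold lsum; simpl; ring|]. rewrite !lsum_cons, IH. ring. Qed.

Lemma lsum_minus (f g : nat -> C) l : lsum f l - lsum g l = lsum (fun i => f i - g i) l.
Proof. induction l as [|a l IH]; [unfold lsum; simpl; ring|]. rewrite !lsum_cons, <- IH. ring. Qed.

Lemma lsum_comm (f : nat -> nat -> C) l1 l2 :
  lsum (fun a => lsum (fun b => f a b) l2) l1 = lsum (fun b => lsum (fun a => f a b) l1) l2.
Proof.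
induction l1 as [|a l1 IH].
- symmetry. apply lsum_zero. reflexivity.
- rewrite lsum_cons, IH, <- lsum_plus. reflexivity.
Qed.

Lemma lsum_window (f : nat -> C) a k B : (a + k <= B)%nat ->
  lsum f (seq a k) = lsum (fun M => if ((a <=? M) && (M <? a + k))%bool then f M else 0) (seq 0 B).
Proof.
intros H.
replace (seq 0 B) with (seq 0 a ++ seq a k ++ seq (a + k) (B - (a + k))).
2:{ rewrite <- seq_app. replace (a + k)%nat with (0 + a + k)%nat at 1 by lia.
    rewrite <- seq_app. f_equal. lia. }
rewrite !lsum_app, (lsum_zero _ (seq 0 a)), (lsum_zero _ (seq (a + k) _)).
- rewrite (lsum_ext_in (fun M => if ((a <=? M) && (M <? a + k))%bool then f M else 0) f (seq a k));
    [ring|].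
  intros M HM. apply in_seq in HM.
  destruct (Nat.leb_spec a M), (Nat.ltb_spec M (a + k)); simpl; try lia. reflexivity.
- intros M HM. apply in_seq in HM.
  destruct (Nat.leb_spec a M), (Nat.ltb_spec M (a + k)); simpl; try lia; reflexivity.
- intros M HM. apply in_seq in HM.
  destruct (Nat.leb_spec a M), (Nat.ltb_spec M (a + k)); simpl; try lia; reflexivity.
Qed.

Lemma lsum_single (f : nat -> C) a N : (forall M, M <> a -> f M = 0) ->
  lsum f (seq 0 N) = if Nat.ltb a N then f a else 0.
Proof.
intros H. induction N as [|N IH]; [reflexivity|].
rewrite seq_S, lsum_app, IH. simpl. unfold lsum at 1; simpl.
destruct (Nat.ltb_spec a N), (Nat.ltb_spec a (S N)); try lia.
- rewrite (H N) by lia. ring.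
- assert (a = N) by lia. subst. ring.
- rewrite (H N) by lia. ring.
Qed.

Lemma sum_n_lsum (a : nat -> C) K : @sum_n C_AbelianMonoid a K = lsum a (seq 0 (S K)).
Proof.
induction K as [|K IH].
- rewrite sum_O. unfold lsum; simpl. ring.
- rewrite sum_Sn, IH, (seq_S (S K)), lsum_app. unfold lsum at 3; simpl.
  change (lsum a (seq 0 (S K)) + a (S K) = lsum a (seq 0 (S K)) + (a (S K) + 0)). ring.
Qed.

Lemma lprod_app (f : nat -> C) l1 l2 : lprod f (l1 ++ l2) = lprod f l1 * lprod f l2.
Proof. induction l1 as [|a l1 IH]; unfold lprod in *; simpl; [ring|]. rewrite IH. ring. Qed.

Lemma lprod_nz (f : nat -> C) l : (forall k, In k l -> f k <> 0) -> lprod f l <> 0.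
Proof.
induction l as [|a l IH]; intros H; unfold lprod; simpl.
- apply C1_nz.
- apply Cmult_neq_0; [apply H; left; auto | apply IH; intros; apply H; right; auto].
Qed.

Lemma Cinv_R0 : / RtoC 0 = 0.
Proof. unfold Cinv, RtoC; simpl. f_equal; unfold Rdiv; ring. Qed.

Lemma RtoC_INR_S_neq N : RtoC (INR (S N)) <> 0.
Proof. intros E. apply RtoC_inj in E. apply (not_0_INR (S N)); auto. Qed.

Lemma div_INR0_pow (z : C) k : (1 <= k)%nat -> z / RtoC (INR 0) ^ k = 0.
Proof. intros H. destruct k; [lia|]. simpl. unfold Cdiv. rewrite Cmult_0_l, Cinv_R0. ring. Qed.

Lemma Cinv_pow_le1 N k : (Cmod (/ RtoC (INR N) ^ k) <= 1)%R.
Proof.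
destruct k.
- simpl. rewrite Cmod_inv by apply C1_nz. rewrite Cmod_1, Rinv_1. lra.
- destruct N.
  + simpl. rewrite Cmult_0_l, Cinv_R0, Cmod_0. lra.
  + rewrite Cmod_inv by (apply Cpow_nz, RtoC_INR_S_neq).
    rewrite Cmod_pow, Cmod_R, Rabs_pos_eq by apply pos_INR.
    rewrite <- Rinv_1. apply Rinv_le_contravar; [lra|].
    rewrite <- (pow1 (S k)). apply pow_incr. rewrite S_INR. pose proof (pos_INR N). lra.
Qed.

Lemma Cmod_divpow_le (z : C) N k : (Cmod (z / RtoC (INR N) ^ k) <= Cmod z)%R.
Proof.
unfold Cdiv. rewrite Cmod_mult. rewrite <- (Rmult_1_r (Cmod z)) at 2.
apply Rmult_le_compat_l; [apply Cmod_ge_0 | apply Cinv_pow_le1].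
Qed.

Lemma Cmod_pow_le1 (z : C) n : (Cmod z <= 1)%R -> (Cmod (z ^ n) <= 1)%R.
Proof.
intros H. rewrite Cmod_pow, <- (pow1 n). apply pow_incr. split; auto. apply Cmod_ge_0.
Qed.

Lemma pow_ratio (s a : C) M N : s <> 0 -> (M <= N)%nat -> s ^ (N - M) * a ^ M = s ^ N * (a / s) ^ M.
Proof.
intros Hs H. replace N with ((N - M) + M)%nat at 2 by lia. rewrite Cpow_add_r.
unfold Cdiv. rewrite Cpow_mult_l, Cpow_inv by auto. field. apply Cpow_nz; auto.
Qed.

Lemma one_minus_neq s t : (Cmod s < 1)%R -> (Cmod t <= 1)%R -> 1 - s * t <> 0.
Proof.
intros Hs Ht E.
assert (Hst : s * t = 1) by (replace (s * t) with (1 - (1 - s * t)) by ring; rewrite E; ring).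
assert (Hlt : (Cmod (s * t) < 1)%R).
{ rewrite Cmod_mult. pose proof (Cmod_ge_0 s). pose proof (Cmod_ge_0 t). nra. }
rewrite Hst, Cmod_1 in Hlt. lra.
Qed.

Notation isC a l := (is_series (K := C_AbsRing) (V := C_NormedModule) a l).

Lemma normC (z : C) : @norm C_AbsRing C_NormedModule z = Cmod z.
Proof. reflexivity. Qed.

Lemma normCR (z : C) : @norm R_AbsRing C_R_NormedModule z = Cmod z.
Proof.
destruct z. unfold norm; simpl. unfold prod_norm, Cmod; simpl. f_equal.
unfold norm; simpl. unfold abs; simpl.
rewrite !Rmult_1_r, <- !Rabs_mult, !Rabs_pos_eq; try apply Rle_0_sqr; ring.
Qed.

Lemma isC_ext (a b : nat -> C) l : (forall n, a n = b n) -> isC a l -> isC b l.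
Proof. intros; eapply is_series_ext; eauto. Qed.

Lemma isC_plus (a b : nat -> C) la lb : isC a la -> isC b lb -> isC (fun n => a n + b n) (la + lb).
Proof. intros Ha Hb. exact (is_series_plus a b la lb Ha Hb). Qed.

Lemma isC_minus (a b : nat -> C) la lb : isC a la -> isC b lb -> isC (fun n => a n - b n) (la - lb).
Proof. intros Ha Hb. exact (is_series_minus a b la lb Ha Hb). Qed.

Lemma isC_scal (c : C) (a : nat -> C) l : isC a l -> isC (fun n => c * a n) (c * l).
Proof. intros Ha. exact (is_series_scal c a l Ha). Qed.

Lemma isC_unique (a : nat -> C) l1 l2 : isC a l1 -> isC a l2 -> l1 = l2.
Proof.
intros H1 H2.
apply (@filterlim_locally_unique nat C_AbsRing C_NormedModule eventually _ (sum_n a)); auto.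
Qed.

Lemma isC_shift_l (a : nat -> C) l : isC a l -> isC (fun k => a (S k)) (l - a 0%nat).
Proof.
intros H. apply is_series_incr_1.
match goal with |- is_series _ ?L => replace L with l; [exact H|] end.
assert (E : forall z w : C, z = z - w + w) by (intros; ring). apply E.
Qed.

Lemma isC_shift_r (a : nat -> C) l : a 0%nat = 0 -> isC (fun k => a (S k)) l -> isC a l.
Proof.
intros H0 H. apply is_series_decr_1.
match goal with |- is_series _ ?L => replace L with l; [exact H|] end.
rewrite H0. assert (E : forall z : C, z = z + - RtoC 0) by (intros; ring). apply E.
Qed.

Lemma isC_zero (a : nat -> C) : (forall n, a n = 0) -> isC a (RtoC 0).
Proof.
intros H. unfold is_series. apply (filterlim_ext (fun _ => RtoC 0)); [|apply filterlim_const].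
intros K. induction K as [|K IH]; [rewrite sum_O, H; reflexivity|].
rewrite sum_Sn, <- IH, H. change (RtoC 0 = 0 + 0). ring.
Qed.

Lemma isC_finite (a : nat -> C) K :
  (forall N, (K < N)%nat -> a N = 0) -> isC a (lsum a (seq 0 (S K))).
Proof.
intros H. unfold is_series. rewrite <- sum_n_lsum.
apply (filterlim_ext_loc (fun _ => sum_n a K)); [|apply filterlim_const].
exists K. intros M HM. induction HM as [|M HM IH]; [reflexivity|].
rewrite sum_Sn, <- IH, H by lia. symmetry; exact (plus_zero_r (sum_n a K)).
Qed.

Lemma isC_lsum (F : nat -> nat -> C) (L : nat -> C) l :
  (forall j, In j l -> isC (F j) (L j)) -> isC (fun N => lsum (fun j => F j N) l) (lsum L l).
Proof.
induction l as [|a l IH]; intros H.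
- apply isC_zero. reflexivity.
- rewrite lsum_cons. eapply isC_ext; [intros N; symmetry; apply lsum_cons|].
  apply isC_plus; [apply H; left; auto | apply IH; intros; apply H; right; auto].
Qed.

Lemma series_tail_bound (a : nat -> C) (b : nat -> R) l L K :
  isC a l -> is_series b L -> (forall N, (Cmod (a N) <= b N)%R) ->
  (Cmod (l - sum_n a K) <= L - sum_n b K)%R.
Proof.
intros Ha Hb Hab.
assert (Hla : filterlim (fun M => Cmod (sum_n a M - sum_n a K)) eventually
                (locally (Cmod (l - sum_n a K)))).
{ assert (Hd : filterlim (fun M => @plus C_AbelianMonoid (sum_n a M) (opp (sum_n a K))) eventually
                 (locally (@plus C_AbelianMonoid l (opp (sum_n a K))))).
  { eapply filterlim_comp_2; [exact Ha | apply filterlim_const |].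
    apply (@filterlim_plus C_AbsRing C_NormedModule). }
  eapply filterlim_comp; [exact Hd | apply (@filterlim_norm C_AbsRing C_NormedModule)]. }
assert (Hlb : is_lim_seq (fun M => sum_n b M - sum_n b K)%R (L - sum_n b K)%R).
{ apply is_lim_seq_minus'; [exact Hb | apply is_lim_seq_const]. }
pose proof (is_lim_seq_le_loc (fun M => Cmod (sum_n a M - sum_n a K))
  (fun M => sum_n b M - sum_n b K)%R (Cmod (l - sum_n a K)) (L - sum_n b K)%R) as Hle.
simpl in Hle. apply Hle; [|exact Hla|exact Hlb].
exists K. intros M HM.
pose proof (@sum_n_m_sum_n C_AbelianGroup a K M ltac:(lia)) as Ea.
pose proof (@sum_n_m_sum_n R_AbelianGroup b K M ltac:(lia)) as Eb.
change (minus (sum_n a M) (sum_n a K)) with (sum_n a M - sum_n a K) in Ea.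
change (minus (sum_n b M) (sum_n b K)) with (sum_n b M - sum_n b K)%R in Eb.
rewrite <- Ea, <- Eb.
eapply Rle_trans; [rewrite <- normC; exact (@norm_sum_n_m C_AbsRing C_NormedModule a (S K) M)|].
apply sum_n_m_le. intros; rewrite normC; auto.
Qed.

(* Absolutely summable coefficient sequences: the domain on which term-by-term
   operations are justified.  Such a sequence defines a power series converging
   on the closed unit disc. *)

Definition abs_sum (c : nat -> C) : Prop := ex_series (fun N => Cmod (c N)).

Lemma abs_sum_ext (f g : nat -> C) : (forall N, f N = g N) -> abs_sum f -> abs_sum g.
Proof. intros H Hf. replace g with f; auto. apply functional_extensionality; auto. Qed.

Lemma abs_sum_le (c : nat -> C) (b : nat -> R) :
  (forall N, (Cmod (c N) <= b N)%R) -> ex_series b -> abs_sum c.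
Proof.
intros Hle Hb. apply (@ex_series_le R_AbsRing R_CompleteNormedModule _ b); auto.
intros N. unfold norm; simpl; unfold abs; simpl. rewrite Rabs_pos_eq by apply Cmod_ge_0. auto.
Qed.

Lemma abs_sum_series (d : nat -> C) (t : C) :
  abs_sum d -> (Cmod t <= 1)%R -> exists D, isC (fun N => d N * t ^ N) D.
Proof.
intros H Ht.
apply (@ex_series_le C_AbsRing C_CompleteNormedModule _ (fun N => Cmod (d N))); auto.
intros N. rewrite normC, Cmod_mult. rewrite <- (Rmult_1_r (Cmod (d N))) at 2.
apply Rmult_le_compat_l; [apply Cmod_ge_0 | apply Cmod_pow_le1; auto].
Qed.

Lemma abs_sum_finite (c : nat -> C) K : (forall N, (K < N)%nat -> c N = 0) -> abs_sum c.
Proof.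
intros H. unfold abs_sum. apply (proj2 (ex_series_incr_n _ (S K))).
exists 0%R. unfold is_series. apply (filterlim_ext (fun _ => 0%R)); [|apply filterlim_const].
intros M. induction M as [|M IH].
- rewrite sum_O, H, Cmod_0 by lia. reflexivity.
- rewrite sum_Sn, <- IH, H, Cmod_0 by lia. change (0 = 0 + 0)%R. ring.
Qed.

Lemma abs_sum_shift c : abs_sum c -> abs_sum (fun N => c (S N)).
Proof. intros H. exact (proj1 (ex_series_incr_1 (fun N => Cmod (c N))) H). Qed.

Lemma abs_sum_divpow (c : nat -> C) k : abs_sum c -> abs_sum (fun N => c N / RtoC (INR N) ^ k).
Proof. intros H. apply (abs_sum_le _ (fun N => Cmod (c N))); auto. intros; apply Cmod_divpow_le. Qed.

Lemma abs_sum_geom_div (s : C) k : (Cmod s < 1)%R -> abs_sum (fun N => s ^ N / RtoC (INR N) ^ k).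
Proof.
intros Hs. apply abs_sum_divpow, (abs_sum_le _ (fun N => Cmod s ^ N)%R).
- intros N. rewrite Cmod_pow. lra.
- exists (/ (1 - Cmod s))%R. apply is_series_geom. rewrite Rabs_pos_eq by apply Cmod_ge_0. auto.
Qed.

Lemma sum_n_le_series (b : nat -> R) B K :
  (forall n, 0 <= b n)%R -> is_series b B -> (sum_n b K <= B)%R.
Proof.
intros Hp HB.
pose proof (is_lim_seq_le_loc (fun _ => sum_n b K) (sum_n b) (sum_n b K) B) as Hle.
simpl in Hle. apply Hle; [| apply is_lim_seq_const | exact HB].
exists K. intros M HM. induction HM as [|M HM IH]; [lra|].
rewrite sum_Sn. specialize (Hp (S M)). change (sum_n b K <= sum_n b M + b (S M))%R. lra.
Qed.

(* A nonnegative sequence obeying a_{n+1} <= rho a_n + b_{n+1} with rho < 1 and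
   b summable is summable: its partial sums are bounded by (sum b) / (1 - rho). *)
Lemma ex_series_contraction (a b : nat -> R) (rho : R) :
  (0 <= rho < 1)%R -> (forall n, 0 <= a n)%R -> (forall n, 0 <= b n)%R ->
  (a 0%nat <= b 0%nat)%R -> (forall n, a (S n) <= rho * a n + b (S n))%R ->
  ex_series b -> ex_series a.
Proof.
intros Hr Ha Hb H0 HS [B HB].
assert (Hrec : forall K, (sum_n a K <= rho * sum_n a K - rho * a K + sum_n b K)%R).
{ induction K as [|K IH]; [rewrite !sum_O; lra|]. rewrite !sum_Sn. specialize (HS K).
  change (sum_n a K + a (S K) <= rho * (sum_n a K + a (S K)) - rho * a (S K)
          + (sum_n b K + b (S K)))%R. nra. }
assert (Hbound : forall K, (sum_n a K <= B / (1 - rho))%R).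
{ intros K. specialize (Hrec K). pose proof (sum_n_le_series b B K Hb HB). specialize (Ha K).
  apply Rmult_le_reg_r with (1 - rho)%R; [lra|].
  unfold Rdiv. rewrite Rmult_assoc, Rinv_l by lra. nra. }
destruct (ex_finite_lim_seq_incr (sum_n a) (B / (1 - rho))%R) as [l Hl]; [|exact Hbound|].
- intros N. rewrite sum_Sn. specialize (Ha (S N)). change (sum_n a N <= sum_n a N + a (S N))%R. lra.
- exists l. exact Hl.
Qed.

(* Cauchy product with the geometric series of ratio s:
   geoc s c N = sum_{M <= N} s^(N-M) c_M, the coefficients of G(t)/(1 - s t). *)
Definition geoc (s : C) (c : nat -> C) (N : nat) : C :=
  lsum (fun M => s ^ (N - M) * c M) (seq 0 (S N)).

Lemma geoc_0 s c : geoc s c 0 = c 0%nat.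
Proof. unfold geoc, lsum; simpl. ring. Qed.

Lemma geoc_S s c N : geoc s c (S N) = s * geoc s c N + c (S N).
Proof.
unfold geoc. rewrite (seq_S (S N)), lsum_app, lsum_scal. simpl (0 + S N)%nat.
rewrite (lsum_ext_in (fun M => s ^ (S N - M) * c M) (fun M => s * (s ^ (N - M) * c M))).
- rewrite lsum_cons, lsum_nil, Nat.sub_diag. simpl. ring.
- intros M HM. apply in_seq in HM. replace (S N - M)%nat with (S (N - M)) by lia. simpl. ring.
Qed.

Lemma abs_sum_geoc s c : (Cmod s < 1)%R -> abs_sum c -> abs_sum (geoc s c).
Proof.
intros Hs Hc. apply (ex_series_contraction _ (fun N => Cmod (c N)) (Cmod s)); auto.
- split; [apply Cmod_ge_0 | exact Hs].
- intros; apply Cmod_ge_0.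
- intros; apply Cmod_ge_0.
- rewrite geoc_0. lra.
- intros N. rewrite geoc_S. eapply Rle_trans; [apply Cmod_triangle|]. rewrite Cmod_mult. lra.
Qed.

(* Coefficients of the primitive vanishing at 0: intco d (k+1) = d k / (k+1). *)
Definition intco (d : nat -> C) (N : nat) : C :=
  match N with O => 0 | S k => d k / RtoC (INR (S k)) end.

Lemma abs_sum_intco d : abs_sum d -> abs_sum (intco d).
Proof.
intros H. apply (proj2 (ex_series_incr_1 _)). simpl.
apply (abs_sum_le _ (fun k => Cmod (d k))); auto.
intros k. pose proof (Cmod_divpow_le (d k) (S k) 1) as Hk.
rewrite Cpow_1_r in Hk. exact Hk.
Qed.

Lemma is_RInt_scal_vec (f : R -> R) a b (I : R) (w : C) :
  is_RInt f a b I -> is_RInt (V := C_R_NormedModule) (fun s => RtoC (f s) * w) a b (RtoC I * w).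
Proof.
intros H. destruct w as [w1 w2].
assert (E : RtoC I * (w1, w2) = ((w1 * I)%R, (w2 * I)%R)) by (unfold RtoC, Cmult; simpl; f_equal; ring).
rewrite E. apply (@is_RInt_fct_extend_pair R_NormedModule R_NormedModule).
- apply (is_RInt_ext (fun s => scal w1 (f s))); [|exact (is_RInt_scal f a b w1 I H)].
  intros; unfold RtoC, Cmult; simpl. unfold scal; simpl; unfold mult; simpl; ring.
- apply (is_RInt_ext (fun s => scal w2 (f s))); [|exact (is_RInt_scal f a b w2 I H)].
  intros; unfold RtoC, Cmult; simpl. unfold scal; simpl; unfold mult; simpl; ring.
Qed.

Lemma is_RInt_poly (d : nat -> C) (u : C) K :
  is_RInt (V := C_R_NormedModule) (fun s => sum_n (fun N => d N * (RtoC s * u) ^ N) K) 0 1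
     (sum_n (fun N => d N * u ^ N / RtoC (INR (S N))) K).
Proof.
assert (Hmono : forall N, is_RInt (V := C_R_NormedModule) (fun s => d N * (RtoC s * u) ^ N) 0 1
     (d N * u ^ N / RtoC (INR (S N)))).
{ intros N. apply (is_RInt_ext (fun s => RtoC (s ^ N) * (d N * u ^ N))).
  - intros s _.
    assert (E : RtoC (s ^ N) * (d N * u ^ N) = d N * (RtoC s * u) ^ N)
      by (rewrite RtoC_pow, Cpow_mult_l; ring).
    exact E.
  - replace (d N * u ^ N / RtoC (INR (S N)))
      with (RtoC (1 ^ S N / INR (S N) - 0 ^ S N / INR (S N)) * (d N * u ^ N)).
    + apply is_RInt_scal_vec, is_RInt_pow.
    + rewrite pow1. simpl (0 ^ S N)%R. rewrite Rmult_0_l.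
      unfold Rdiv. rewrite Rmult_0_l, Rminus_0_r, Rmult_1_l.
      rewrite RtoC_inv by (apply not_0_INR; lia). unfold Cdiv. ring. }
induction K as [|K IH].
- rewrite sum_O. apply (is_RInt_ext (fun s => d 0%nat * (RtoC s * u) ^ 0)); [|apply Hmono].
  intros; rewrite sum_O; reflexivity.
- rewrite sum_Sn.
  apply (is_RInt_ext (fun s => plus (sum_n (fun N => d N * (RtoC s * u) ^ N) K)
                                    (d (S K) * (RtoC s * u) ^ S K))).
  + intros; rewrite sum_Sn; reflexivity.
  + apply (@is_RInt_plus C_R_NormedModule); [apply IH | apply Hmono].
Qed.

(* Clamping s to [0,1] makes the power series defined (and uniformly convergent)
   for every real parameter, which the uniform-limit theorem for integrals requires. *)
Definition clamp (s : R) : R := Rmax 0 (Rmin s 1).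

Lemma clamp_id s : (0 <= s <= 1)%R -> clamp s = s.
Proof. intros; unfold clamp. rewrite Rmin_left by lra. rewrite Rmax_right by lra. reflexivity. Qed.

Lemma clamp_bnd s : (0 <= clamp s <= 1)%R.
Proof. unfold clamp. split; [apply Rmax_l | apply Rmax_lub; [lra | apply Rmin_r]]. Qed.

Definition clamped_term (d : nat -> C) (u : C) (s : R) (N : nat) : C :=
  d N * (RtoC (clamp s) * u) ^ N.

Lemma clamped_term_bound d u s N :
  (Cmod u <= 1)%R -> (Cmod (clamped_term d u s N) <= Cmod (d N))%R.
Proof.
intros Hu. unfold clamped_term. rewrite Cmod_mult. rewrite <- (Rmult_1_r (Cmod (d N))) at 2.
apply Rmult_le_compat_l; [apply Cmod_ge_0|]. apply Cmod_pow_le1.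
rewrite Cmod_mult, Cmod_R. destruct (clamp_bnd s).
rewrite Rabs_pos_eq by lra. replace 1%R with (1 * 1)%R by ring.
apply Rmult_le_compat; auto; apply Cmod_ge_0.
Qed.

(* Weierstrass M-test: the clamped partial sums converge uniformly in s. *)
Lemma clamped_series_uniform (d : nat -> C) (u : C) :
  abs_sum d -> (Cmod u <= 1)%R ->
  exists F : R -> C, (forall s, isC (clamped_term d u s) (F s)) /\
    filterlim (fun K s => sum_n (clamped_term d u s) K) eventually
              (locally (F : fct_UniformSpace R C_R_CompleteNormedModule)).
Proof.
intros [Sd HSd] Hu.
assert (Hb := fun s N => clamped_term_bound d u s N Hu).
assert (Hex : forall s, exists l, isC (clamped_term d u s) l).
{ intros s. apply (@ex_series_le C_AbsRing C_CompleteNormedModule _ (fun N => Cmod (d N))).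
  - intros N. rewrite normC. apply Hb.
  - exists Sd. exact HSd. }
destruct (choice _ Hex) as [F HF].
exists F. split; [exact HF|].
apply (proj2 (filterlim_locally (U := fct_UniformSpace R C_R_CompleteNormedModule) _ F)).
intros eps.
destruct (proj1 (@filterlim_locally_ball_norm R_AbsRing nat R_NormedModule eventually _ _ Sd)
            HSd eps) as [K0 HK0].
exists K0. intros K HK s.
apply (@norm_compat1 R_AbsRing C_R_NormedModule). rewrite normCR.
change (minus (sum_n (clamped_term d u s) K) (F s)) with (sum_n (clamped_term d u s) K - F s).
replace (sum_n (clamped_term d u s) K - F s) with (- (F s - sum_n (clamped_term d u s) K)) by ring.
rewrite Cmod_opp.
eapply Rle_lt_trans; [exact (series_tail_bound _ _ _ _ K (HF s) HSd (Hb s))|].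
specialize (HK0 K HK). unfold ball_norm in HK0.
change (Rabs (sum_n (fun N => Cmod (d N)) K - Sd) < eps)%R in HK0.
eapply Rle_lt_trans; [|exact HK0]. rewrite Rabs_minus_sym. apply Rle_abs.
Qed.

Lemma line_int_series (d : nat -> C) (g : C -> C) (u : C) :
  abs_sum d -> (Cmod u <= 1)%R ->
  (forall r : R, (0 < r < 1)%R -> isC (fun N => d N * (RtoC r * u) ^ N) (g (RtoC r * u))) ->
  isC (fun N => intco d N * u ^ N) (line_int g 0 u).
Proof.
intros Hd Hu Hg.
destruct (clamped_series_uniform d u Hd Hu) as [F [HF Hunif]].
set (h := fun K => sum_n (fun N => d N * u ^ N / RtoC (INR (S N))) K).
assert (HI : forall K, is_RInt (V := C_R_CompleteNormedModule)
                         (fun s => sum_n (clamped_term d u s) K) 0 1 (h K)).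
{ intros K. eapply is_RInt_ext; [|apply is_RInt_poly].
  intros s Hs. rewrite Rmin_left, Rmax_right in Hs by lra.
  assert (E : @sum_n C_AbelianMonoid (fun N => d N * (RtoC s * u) ^ N) K
              = @sum_n C_AbelianMonoid (clamped_term d u s) K).
  { apply sum_n_ext. intros N. unfold clamped_term. rewrite clamp_id by lra. reflexivity. }
  exact E. }
destruct (@filterlim_RInt nat C_R_CompleteNormedModule _ 0 1 eventually _ F h HI Hunif)
  as [If [Hh HIf]].
(* On the open interval, F coincides with the integrand g. *)
assert (HIg : is_RInt (V := C_R_CompleteNormedModule) (fun s => g (0 + RtoC s * (u - 0))) 0 1 If).
{ eapply is_RInt_ext; [|exact HIf].
  intros s Hs. rewrite Rmin_left, Rmax_right in Hs by lra.
  replace (0 + RtoC s * (u - 0)) with (RtoC s * u) by ring.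
  apply (isC_unique (clamped_term d u s)); [apply HF|].
  eapply isC_ext; [|apply (Hg s Hs)]. intros N. unfold clamped_term. rewrite clamp_id by lra.
  reflexivity. }
unfold line_int. rewrite (is_RInt_unique _ _ _ _ HIg).
apply isC_shift_r; [simpl; ring|].
assert (Hh' : isC (fun N => d N * u ^ N / RtoC (INR (S N))) If) by exact Hh.
replace ((u - 0) * If) with (u * If) by ring.
eapply isC_ext; [|exact (isC_scal u _ _ Hh')].
intros N. simpl. unfold Cdiv. ring.
Qed.

Definition represents (c : nat -> C) (G : C -> C) : Prop :=
  abs_sum c /\ c 0%nat = 0 /\
  forall u, (Cmod u <= 1)%R -> isC (fun N => c N * u ^ N) (G u).

Lemma geoc_series (s : C) (c : nat -> C) (G t : C) : (Cmod s < 1)%R -> abs_sum c -> (Cmod t <= 1)%R ->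
  isC (fun N => c N * t ^ N) G -> isC (fun N => geoc s c N * t ^ N) (/ (1 - s * t) * G).
Proof.
intros Hs Hc Ht HG.
destruct (abs_sum_series (geoc s c) t (abs_sum_geoc s c Hs Hc) Ht) as [D HD].
(* (1 - s t) D has coefficients geoc_N - s geoc_(N-1) = c_N. *)
assert (Hshift : isC (fun N => match N with O => RtoC 0 | S k => s * t * (geoc s c k * t ^ k) end)
                   (s * t * D)).
{ apply isC_shift_r; [reflexivity|]. apply isC_scal. exact HD. }
assert (HcD : isC (fun N => c N * t ^ N) (D - s * t * D)).
{ eapply isC_ext; [|exact (isC_minus _ _ _ _ HD Hshift)].
  intros [|N]; simpl; [rewrite geoc_0; ring | rewrite geoc_S; ring]. }
rewrite (isC_unique _ _ _ HG HcD).
assert (Hdiv : forall z : C, / (1 - s * t) * (z - s * t * z) = z).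
{ intros z. field. apply one_minus_neq; auto. }
replace (/ (1 - s * t) * (D - s * t * D)) with D; [exact HD | symmetry; apply Hdiv].
Qed.

Lemma shift_series (c : nat -> C) (G t : C) : c 0%nat = 0 -> t <> 0 ->
  isC (fun N => c N * t ^ N) G -> isC (fun N => c (S N) * t ^ N) (/ t * G).
Proof.
intros H0 Ht HG.
apply isC_shift_l in HG. rewrite H0 in HG.
replace (/ t * G) with (/ t * (G - 0 * t ^ 0)) by ring.
eapply isC_ext; [|exact (isC_scal _ _ _ HG)].
intros N. simpl. field. exact Ht.
Qed.

Inductive form := Geo (s : C) | Inv.

Definition form_fun (f : form) : C -> C :=
  match f with Geo s => fun t => / (1 - s * t) | Inv => fun t => / t end.

Definition form_ok (f : form) : Prop :=
  match f with Geo s => (Cmod s < 1)%R | Inv => True end.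

Definition form_mul (f : form) (c : nat -> C) : nat -> C :=
  match f with Geo s => geoc s c | Inv => fun N => c (S N) end.

Definition integrate_coef (c : nat -> C) (f : form) : nat -> C := intco (form_mul f c).

Lemma abs_sum_form_mul f c : form_ok f -> abs_sum c -> abs_sum (form_mul f c).
Proof. destruct f; simpl; intros; [apply abs_sum_geoc | apply abs_sum_shift]; auto. Qed.

Lemma form_mul_series f (c : nat -> C) (G t : C) : form_ok f -> abs_sum c -> c 0%nat = 0 ->
  (Cmod t <= 1)%R -> t <> 0 ->
  isC (fun N => c N * t ^ N) G -> isC (fun N => form_mul f c N * t ^ N) (form_fun f t * G).
Proof. destruct f; simpl; intros; [apply geoc_series | apply shift_series]; auto. Qed.

Lemma isC_at_zero (c : nat -> C) : c 0%nat = 0 -> isC (fun N => c N * 0 ^ N) (RtoC 0).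
Proof. intros H. apply isC_zero. intros [|N]; simpl; [rewrite H|]; ring. Qed.

Lemma line_int_zero g : line_int g 0 0 = 0.
Proof. unfold line_int. ring. Qed.

Lemma represents_integrate f c G : form_ok f -> represents c G ->
  represents (integrate_coef c f) (fun u => line_int (fun t => form_fun f t * G t) 0 u).
Proof.
intros Hf [Hc [H0 HG]]. split; [|split].
- apply abs_sum_intco, abs_sum_form_mul; auto.
- reflexivity.
- intros u Hu. destruct (Ceq_dec u 0) as [->|Hu0].
  + rewrite line_int_zero. apply isC_at_zero. reflexivity.
  + apply line_int_series; [apply abs_sum_form_mul; auto | exact Hu |].
    intros r Hr.
    assert (Hru : (Cmod (RtoC r * u) <= 1)%R).
    { rewrite Cmod_mult, Cmod_R, Rabs_pos_eq by lra. pose proof (Cmod_ge_0 u). nra. }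
    apply form_mul_series; auto.
    apply Cmult_neq_0; auto. intros E. apply RtoC_inj in E. lra.
Qed.

(* The innermost integral int_0^u t^(n-1) dt = u^n / n has the single coefficient 1/n
   at index n. *)
Definition base_coef (n : nat) (N : nat) : C := if Nat.eqb N n then / RtoC (INR n) else 0.

Lemma base_coef_intco n : (1 <= n)%nat ->
  base_coef n = intco (fun N => if Nat.eqb N (n - 1) then RtoC 1 else RtoC 0).
Proof.
intros Hn. apply functional_extensionality. intros [|N]; unfold base_coef, intco.
- destruct (Nat.eqb_spec 0 n); [lia | reflexivity].
- destruct (Nat.eqb_spec N (n - 1)), (Nat.eqb_spec (S N) n); try lia.
  + subst n. unfold Cdiv. ring.
  + unfold Cdiv. ring.
Qed.

Lemma represents_base n : (1 <= n)%nat ->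
  represents (base_coef n) (itint_out ((fun t => t ^ (n - 1)) :: nil)).
Proof.
intros Hn. rewrite base_coef_intco by exact Hn.
set (mono := fun N => if Nat.eqb N (n - 1) then RtoC 1 else RtoC 0).
assert (Hfin : forall N, (n - 1 < N)%nat -> mono N = 0).
{ intros N HN. unfold mono. destruct (Nat.eqb_spec N (n - 1)); [lia | reflexivity]. }
split; [|split].
- apply abs_sum_intco, (abs_sum_finite _ _ Hfin).
- reflexivity.
- intros u Hu. simpl. destruct (Ceq_dec u 0) as [->|Hu0].
  + rewrite line_int_zero. apply isC_at_zero. reflexivity.
  + apply line_int_series; [exact (abs_sum_finite _ _ Hfin) | exact Hu |].
    intros r Hr. set (t := RtoC r * u).
    replace (t ^ (n - 1) * 1) with (lsum (fun N => mono N * t ^ N) (seq 0 (S (n - 1)))).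
    * apply isC_finite. intros N HN. rewrite Hfin by exact HN. ring.
    * rewrite seq_S, lsum_app, lsum_zero.
      -- unfold lsum; simpl. unfold mono. rewrite Nat.eqb_refl. ring.
      -- intros N HN. apply in_seq in HN. unfold mono.
         destruct (Nat.eqb_spec N (n - 1)); [lia | ring].
Qed.

Lemma represents_itint n fs : (1 <= n)%nat -> List.Forall form_ok fs ->
  represents (fold_left integrate_coef fs (base_coef n))
             (itint ((fun t => t ^ (n - 1)) :: map form_fun fs)).
Proof.
intros Hn. unfold itint. induction fs as [|f fs IH] using rev_ind; intros Hok.
- apply represents_base. exact Hn.
- apply Forall_app in Hok. destruct Hok as [Hok Hf]. inversion Hf; subst.
  rewrite fold_left_app. cbn [fold_left].
  replace (itint_out (rev ((fun t => t ^ (n - 1)) :: map form_fun (fs ++ f :: nil))))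
    with (fun u => line_int (fun t => form_fun f t *
            itint_out (rev ((fun t => t ^ (n - 1)) :: map form_fun fs)) t) 0 u).
  + apply represents_integrate; auto.
  + apply functional_extensionality. intros u. rewrite map_app. simpl. rewrite rev_app_distr.
    reflexivity.
Qed.

Definition conv (s : C) (k : nat) (f : nat -> C) (N : nat) : C :=
  lsum (fun M => s ^ (N - M) * f M) (seq 0 N) / RtoC (INR N) ^ k.

(* blockc s k c N = (sum_{M < N} s^(N-1-M) c_M) / N^k: the coefficients produced
   from c by the block dt/(1 - s t) (dt/t)^(k-1). *)
Definition blockc (s : C) (k : nat) (c : nat -> C) (N : nat) : C :=
  lsum (fun M => s ^ (N - 1 - M) * c M) (seq 0 N) / RtoC (INR N) ^ k.

Lemma integrate_geo s c : integrate_coef c (Geo s) = blockc s 1 c.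
Proof.
apply functional_extensionality. intros [|N]; unfold integrate_coef, blockc, intco, form_mul.
- symmetry. apply div_INR0_pow. auto.
- unfold geoc. simpl (S N - 1)%nat. rewrite Nat.sub_0_r, Cpow_1_r. reflexivity.
Qed.

Lemma integrate_inv_blockc s k c : integrate_coef (blockc s k c) Inv = blockc s (S k) c.
Proof.
apply functional_extensionality. intros [|N]; unfold integrate_coef, intco, form_mul, blockc.
- simpl. unfold lsum, Cdiv; simpl. ring.
- change (RtoC (INR (S N)) ^ S k) with (RtoC (INR (S N)) * RtoC (INR (S N)) ^ k).
  pose proof (RtoC_INR_S_neq N) as HN.
  field. split; [apply Cpow_nz|]; exact HN.
Qed.

Lemma integrate_block s k c : (1 <= k)%nat ->
  fold_left integrate_coef (Geo s :: repeat Inv (k - 1)) c = blockc s k c.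
Proof.
intros Hk. destruct k as [|k]; [lia|]. simpl (S k - 1)%nat. rewrite Nat.sub_0_r.
cbn [fold_left]. rewrite integrate_geo. clear Hk. induction k as [|k IH]; [reflexivity|].
change (repeat Inv (S k)) with (Inv :: repeat Inv k).
rewrite repeat_cons, fold_left_app, IH. apply integrate_inv_blockc.
Qed.

Lemma conv_ext s k f g N : (forall M, f M = g M) -> conv s k f N = conv s k g N.
Proof. intros H. unfold conv. f_equal. apply lsum_ext_in. intros; rewrite H; reflexivity. Qed.

Lemma conv_scal s k a f N : conv s k (fun M => a * f M) N = a * conv s k f N.
Proof.
unfold conv, Cdiv. rewrite Cmult_assoc. f_equal. rewrite lsum_scal.
apply lsum_ext_in. intros; ring.
Qed.

Lemma conv_lin s k (h : nat -> nat -> C) l a (g : nat -> C) N :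
  conv s k (fun M => lsum (fun j => h j M) l + a * g M) N =
  lsum (fun j => conv s k (h j) N) l + a * conv s k g N.
Proof.
unfold conv, Cdiv.
rewrite (lsum_ext_in _ (fun M => lsum (fun j => s ^ (N - M) * h j M) l + a * (s ^ (N - M) * g M))).
- rewrite lsum_plus, lsum_comm, <- (lsum_scal a (fun M => s ^ (N - M) * g M)).
  rewrite Cmult_plus_distr_r, lsum_scal_r. ring.
- intros M _. rewrite Cmult_plus_distr_l, lsum_scal. ring.
Qed.

Lemma conv_0 s k f : (1 <= k)%nat -> conv s k f 0 = 0.
Proof. intros Hk. unfold conv. apply div_INR0_pow. exact Hk. Qed.

Lemma blockc_conv s k c N (D : C) : D * s * blockc s k c N = conv s k (fun M => D * c M) N.
Proof.
unfold blockc, conv, Cdiv. rewrite Cmult_assoc. f_equal.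
rewrite lsum_scal. apply lsum_ext_in. intros M HM. apply in_seq in HM.
replace (N - M)%nat with (S (N - 1 - M)) by lia. simpl. ring.
Qed.

Lemma abs_sum_conv s k f : (Cmod s < 1)%R -> abs_sum f -> abs_sum (conv s k f).
Proof.
intros Hs Hf. apply (proj2 (ex_series_incr_1 _)).
apply (abs_sum_le _ (fun K => Cmod (geoc s f K))); [|exact (abs_sum_geoc s f Hs Hf)].
intros K. eapply Rle_trans; [apply Cmod_divpow_le|].
replace (lsum (fun M => s ^ (S K - M) * f M) (seq 0 (S K))) with (s * geoc s f K).
- rewrite Cmod_mult. pose proof (Cmod_ge_0 (geoc s f K)). pose proof (Cmod_ge_0 s). nra.
- unfold geoc. rewrite lsum_scal. apply lsum_ext_in. intros M HM. apply in_seq in HM.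
  replace (S K - M)%nat with (S (K - M)) by lia. simpl. ring.
Qed.

Fixpoint zLB (n : nat) (kx : list (nat * C)) (L : nat) : C :=
  match kx with
  | nil => if Nat.leb L n then 1 else 0
  | (k, y) :: r => lsum (fun n1 => Cpow y n1 / Cpow (RtoC (INR n1)) k * zLB n1 r L) (seq 1 n)
  end.

Lemma zLB_vanish kx : forall n L, (n < L)%nat -> zLB n kx L = 0.
Proof.
induction kx as [|[k y] r IH]; intros n L H; simpl.
- destruct (Nat.leb_spec L n); [lia | reflexivity].
- apply lsum_zero. intros x Hx. apply in_seq in Hx. rewrite IH by lia. ring.
Qed.

Lemma zstar_zLB kx : forall n, (1 <= n)%nat -> zstar n kx = zLB n kx 1.
Proof.
induction kx as [|[k y] r IH]; intros n H; simpl.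
- destruct n; [lia | reflexivity].
- apply lsum_ext_in. intros x Hx. apply in_seq in Hx. rewrite IH by lia. reflexivity.
Qed.

Lemma zLB_snoc kx k y : forall n L,
  zLB n (kx ++ (k, y) :: nil) L =
  lsum (fun M => (if Nat.leb L M then 1 else 0) * (Cpow y M / Cpow (RtoC (INR M)) k * zLB n kx M))
       (seq 1 n).
Proof.
induction kx as [|[k' y'] r IH]; intros n L; simpl.
- apply lsum_ext_in. intros x Hx. apply in_seq in Hx. destruct (Nat.leb_spec x n); [|lia].
  destruct (Nat.leb_spec L x); ring.
- rewrite (lsum_ext_in _ (fun n1 => lsum (fun M => Cpow y' n1 / Cpow (RtoC (INR n1)) k' *
     ((if Nat.leb L M then 1 else 0) * (Cpow y M / Cpow (RtoC (INR M)) k * zLB n1 r M))) (seq 1 n))).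
  + rewrite lsum_comm. apply lsum_ext_in. intros M HM.
    rewrite !lsum_scal. apply lsum_ext_in. intros x Hx. ring.
  + intros x Hx. apply in_seq in Hx. rewrite IH, lsum_scal.
    (* the inner sum over M <= x extends to M <= n since zLB x r M = 0 for M > x *)
    replace (seq 1 n) with (seq 1 x ++ seq (1 + x) (n - x)) by (rewrite <- seq_app; f_equal; lia).
    rewrite lsum_app, (lsum_zero _ (seq (1 + x) _)); [ring|].
    intros M HM. apply in_seq in HM. rewrite (zLB_vanish r x M) by lia. ring.
Qed.

Lemma LiN_conv (s s' : C) (k k' : nat) (r : list (nat * C)) (N : nat) :
  s' <> 0 -> (1 <= k)%nat -> (1 <= k')%nat ->
  s' ^ N / RtoC (INR N) ^ k' * LiN (N - 1) ((k, s / s') :: r) =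
  conv s' k' (fun M => s ^ M / RtoC (INR M) ^ k * LiN (M - 1) r) N.
Proof.
intros Hs Hk Hk'. destruct N as [|K].
- rewrite conv_0, div_INR0_pow by auto. ring.
- unfold conv. simpl (S K - 1)%nat. rewrite Nat.sub_0_r. simpl LiN.
  change (seq 0 (S K)) with (0%nat :: seq 1 K).
  rewrite lsum_cons, (div_INR0_pow (s ^ 0)) by auto.
  rewrite (lsum_ext_in (fun M => s' ^ (S K - M) * (s ^ M / RtoC (INR M) ^ k * LiN (M - 1) r))
     (fun M => s' ^ (S K) * ((s / s') ^ M / RtoC (INR M) ^ k * LiN (M - 1) r))).
  + rewrite <- lsum_scal. unfold Cdiv. ring.
  + intros M HM. apply in_seq in HM. unfold Cdiv. rewrite !Cmult_assoc.
    rewrite (pow_ratio s' s M (S K)) by (auto; lia). unfold Cdiv. ring.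
Qed.

Lemma sum_cut (g : nat -> C) n N : g 0%nat = 0 -> (forall M, (n < M)%nat -> g M = 0) ->
  lsum g (seq 0 N) = lsum (fun M => (1 - (if Nat.leb N M then 1 else 0)) * g M) (seq 1 n).
Proof.
intros H0 Hn.
rewrite (lsum_window g 0 N (S (N + n))), (lsum_window _ 1 n (S (N + n))) by lia.
apply lsum_ext_in. intros M _.
destruct (Nat.leb_spec 0 M), (Nat.ltb_spec M (0 + N)), (Nat.leb_spec 1 M),
         (Nat.ltb_spec M (1 + n)), (Nat.leb_spec N M);
  simpl; try lia; try ring;
  first [ (assert (M = 0)%nat by lia; subst; rewrite H0; ring) | (rewrite Hn by lia; ring) ].
Qed.

Lemma conv_zLB (s s' : C) (k k' n : nat) (l : list (nat * C)) (N : nat) :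
  s' <> 0 -> (1 <= k)%nat -> (1 <= k')%nat ->
  conv s' k' (fun M => s ^ M / RtoC (INR M) ^ k * zLB n l M) N =
  s' ^ N / RtoC (INR N) ^ k' * (zLB n (l ++ (k, s / s') :: nil) 1 - zLB n (l ++ (k, s / s') :: nil) N).
Proof.
intros Hs Hk Hk'. rewrite !zLB_snoc, lsum_minus.
set (g := fun M => (s / s') ^ M / RtoC (INR M) ^ k * zLB n l M).
rewrite (lsum_ext_in _ (fun M => (1 - (if N <=? M then 1 else 0)) * g M)).
2:{ intros M HM. apply in_seq in HM. destruct (Nat.leb_spec 1 M); [|lia]. unfold g. ring. }
rewrite <- sum_cut.
- unfold conv. rewrite (lsum_ext_in _ (fun M => s' ^ N * g M)).
  + rewrite <- lsum_scal. unfold Cdiv. ring.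
  + intros M HM. apply in_seq in HM. unfold g, Cdiv. rewrite !Cmult_assoc.
    rewrite (pow_ratio s' s M N) by (auto; lia). unfold Cdiv. ring.
- unfold g. rewrite div_INR0_pow by auto. ring.
- intros M HM. unfold g. rewrite zLB_vanish by auto. ring.
Qed.

Section ClosedForm.

Variables (sigma : nat -> C) (m : nat -> nat) (n : nat).

Definition wterm (i N : nat) : C := sigma i ^ N / RtoC (INR N) ^ (m i).

Definition arg (k : nat) : nat * C := (m k, sigma k / sigma (S k)).

Definition zeta_args (i : nat) : list (nat * C) := map arg (seq 1 i).

(* Arguments (m_(i-1), ...), ..., (m_(j+1), ...) following the first one in the polylog
   Li_{m_i, m_(i-1), ..., m_(j+1)}(sigma_i x, sigma_(i-1)/sigma_i, ...). *)
Definition li_tail (j i : nat) : list (nat * C) := map arg (rev (seq (S j) (i - 1 - j))).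

(* N-th term (without x^N) of the defining series of that polylog. *)
Definition li_term (j i N : nat) : C := wterm i N * LiN (N - 1) (li_tail j i).

Definition denom (i : nat) : C := sigma 1 ^ (n + 1) * lprod sigma (seq 2 (i - 1)).

(* Coefficients of the iterated integral with the first i blocks. *)
Fixpoint block_coef (i : nat) : nat -> C :=
  match i with
  | O => base_coef n
  | S i' => blockc (sigma (S i')) (m (S i')) (block_coef i')
  end.

Definition closed_form (i : nat) : Prop := forall N,
  RtoC (INR n) * denom i * block_coef i N =
  lsum (fun j => (-1) ^ j * zstar n (zeta_args j) * li_term j i N) (seq 0 i)
  + (-1) ^ i * (wterm i N * zLB n (zeta_args (i - 1)) N).

Lemma closed_form_1 : (1 <= n)%nat -> sigma 1 <> 0 -> closed_form 1.
Proof.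
intros Hn Hs N. unfold closed_form.
assert (Hden : denom 1 = sigma 1%nat ^ (n + 1)) by (unfold denom, lprod; simpl; ring).
assert (Hrhs : lsum (fun j => (-1) ^ j * zstar n (zeta_args j) * li_term j 1 N) (seq 0 1)
               + (-1) ^ 1 * (wterm 1 N * zLB n (zeta_args (1 - 1)) N)
             = wterm 1 N * (1 - (if Nat.leb N n then 1 else 0))).
{ unfold lsum, li_term, li_tail, zeta_args. simpl. ring. }
rewrite Hrhs, Hden. simpl block_coef. unfold blockc.
rewrite (lsum_single _ n N).
2:{ intros M HM. unfold base_coef. destruct (Nat.eqb_spec M n); [lia | ring]. }
unfold base_coef. rewrite Nat.eqb_refl.
assert (Hn0 : RtoC (INR n) <> 0) by (intros E; apply RtoC_inj, (not_0_INR n) in E; lia).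
destruct (Nat.ltb_spec n N), (Nat.leb_spec N n); try lia.
- assert (Hpow : sigma 1%nat ^ (n + 1) * sigma 1%nat ^ (N - 1 - n) = sigma 1%nat ^ N)
    by (rewrite <- Cpow_add_r; f_equal; lia).
  assert (HN0 : RtoC (INR N) ^ m 1%nat <> 0)
    by (apply Cpow_nz; intros E; apply RtoC_inj, (not_0_INR N) in E; lia).
  unfold wterm. rewrite <- Hpow. unfold Cdiv. field. auto.
- unfold Cdiv. ring.
Qed.

Lemma li_tail_S j i : (j <= i)%nat -> li_tail j (S (S i)) = arg (S i) :: li_tail j (S i).
Proof.
intros H. unfold li_tail.
replace (S (S i) - 1 - j)%nat with (S (i - j)) by lia.
replace (S i - 1 - j)%nat with (i - j)%nat by lia.
rewrite seq_S, rev_app_distr. simpl. replace (S (j + (i - j))) with (S i) by lia. reflexivity.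
Qed.

(* Adding the block of sigma_(i+1): each Li-part absorbs one more index through
   LiN_conv, and the remainder term splits into a new zeta-star value (j = i) and
   a new remainder (conv_zLB). *)
Lemma closed_form_S i : (1 <= n)%nat -> sigma (S (S i)) <> 0 ->
  (1 <= m (S i))%nat -> (1 <= m (S (S i)))%nat ->
  closed_form (S i) -> closed_form (S (S i)).
Proof.
intros Hn Hs' Hm Hm' IH N. unfold closed_form.
set (s' := sigma (S (S i))). set (k' := m (S (S i))).
assert (Hden : denom (S (S i)) = denom (S i) * s').
{ unfold denom. simpl (S (S i) - 1)%nat. simpl (S i - 1)%nat. rewrite !Nat.sub_0_r.
  rewrite seq_S, lprod_app. change (lprod sigma ((2 + i)%nat :: nil)) with (s' * 1). ring. }
change (block_coef (S (S i))) with (blockc s' k' (block_coef (S i))).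
rewrite Hden.
replace (RtoC (INR n) * (denom (S i) * s') * blockc s' k' (block_coef (S i)) N)
  with ((RtoC (INR n) * denom (S i)) * s' * blockc s' k' (block_coef (S i)) N) by ring.
rewrite blockc_conv, (conv_ext _ _ _ _ N IH).
replace (S i - 1)%nat with i by lia. replace (S (S i) - 1)%nat with (S i) by lia.
rewrite conv_lin, (seq_S (S i)), lsum_app. simpl (0 + S i)%nat.
rewrite (lsum_ext_in (fun j => conv s' k' (fun M => (-1) ^ j * zstar n (zeta_args j) * li_term j (S i) M) N)
   (fun j => (-1) ^ j * zstar n (zeta_args j) * li_term j (S (S i)) N)).
2:{ intros j Hj. apply in_seq in Hj. rewrite conv_scal. unfold li_term.
    rewrite li_tail_S by lia. unfold wterm. rewrite <- LiN_conv by auto. reflexivity. }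
unfold wterm at 1. rewrite conv_zLB by auto.
assert (Hz : zeta_args i ++ (m (S i), sigma (S i) / s') :: nil = zeta_args (S i))
  by (unfold zeta_args; rewrite (seq_S i), map_app; reflexivity).
rewrite Hz, <- zstar_zLB by auto.
assert (Hlast : li_term (S i) (S (S i)) N = wterm (S (S i)) N).
{ unfold li_term, li_tail. replace (S (S i) - 1 - S i)%nat with 0%nat by lia. simpl. ring. }
rewrite lsum_cons, lsum_nil, Hlast. unfold wterm, s', k'.
change ((-1) ^ S (S i)) with (-1 * (-1) ^ S i). ring.
Qed.

Lemma closed_form_all p : (1 <= n)%nat ->
  (forall k, (1 <= k <= p)%nat -> sigma k <> 0 /\ (1 <= m k)%nat) ->
  forall i, (1 <= i <= p)%nat -> closed_form i.
Proof.
intros Hn H i Hi. destruct i as [|i]; [lia|]. induction i as [|i IHi].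
- apply closed_form_1; [exact Hn | apply H; lia].
- apply closed_form_S; try apply H; try lia. apply IHi. lia.
Qed.

Lemma abs_sum_li_term p j :
  (forall k, (1 <= k <= p)%nat -> sigma k <> 0 /\ (Cmod (sigma k) < 1)%R /\ (1 <= m k)%nat) ->
  forall i, (j < i <= p)%nat -> abs_sum (li_term j i).
Proof.
intros H i Hi. induction i as [|i IH]; [lia|].
destruct (Nat.eq_dec i j) as [->|Hij].
- apply (abs_sum_ext (wterm (S j))).
  + intros N. unfold li_term, li_tail. replace (S j - 1 - j)%nat with 0%nat by lia. simpl. ring.
  + apply abs_sum_geom_div, H. lia.
- destruct i as [|i]; [lia|].
  destruct (H (S (S i))) as [Hs0 [Hs1 Hm]]; [lia|]. destruct (H (S i)) as [_ [_ Hm']]; [lia|].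
  apply (abs_sum_ext (conv (sigma (S (S i))) (m (S (S i))) (li_term j (S i)))).
  + intros N. unfold li_term. rewrite li_tail_S by lia. unfold wterm.
    rewrite <- LiN_conv by auto. reflexivity.
  + apply abs_sum_conv; [exact Hs1 | apply IH; lia].
Qed.

Lemma block_coef_fold p : (forall k, (1 <= k <= p)%nat -> (1 <= m k)%nat) ->
  fold_left integrate_coef (flat_map (fun i => Geo (sigma i) :: repeat Inv (m i - 1)) (seq 1 p))
            (base_coef n)
  = block_coef p.
Proof.
intros H. induction p as [|p IH]; [reflexivity|].
rewrite seq_S, flat_map_app, fold_left_app, IH by (intros; apply H; lia).
simpl. rewrite app_nil_r. apply integrate_block, H. lia.
Qed.

End ClosedForm.

Lemma lim_fst (a : nat -> C) l : filterlim a eventually (locally (l : C_UniformSpace)) ->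
  is_lim_seq (fun N => fst (a N)) (fst l).
Proof.
intros H. apply (proj2 (filterlim_locally (U := R_UniformSpace) _ _)). intros eps.
destruct (proj1 (filterlim_locally (U := C_UniformSpace) _ _) H eps) as [K HK].
exists K. intros N HN. exact (proj1 (HK N HN)).
Qed.

Lemma lim_snd (a : nat -> C) l : filterlim a eventually (locally (l : C_UniformSpace)) ->
  is_lim_seq (fun N => snd (a N)) (snd l).
Proof.
intros H. apply (proj2 (filterlim_locally (U := R_UniformSpace) _ _)). intros eps.
destruct (proj1 (filterlim_locally (U := C_UniformSpace) _ _) H eps) as [K HK].
exists K. intros N HN. exact (proj2 (HK N HN)).
Qed.

Lemma Li_series k y r l : (1 <= k)%nat ->
  isC (fun K => y ^ K / RtoC (INR K) ^ k * LiN (K - 1) r) l -> Li ((k, y) :: r) = l.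
Proof.
intros Hk H.
assert (Hpartial : forall N, LiN N ((k, y) :: r)
          = @sum_n C_AbelianMonoid (fun K => y ^ K / RtoC (INR K) ^ k * LiN (K - 1) r) N).
{ intros N. rewrite sum_n_lsum. simpl LiN. change (seq 0 (S N)) with (0%nat :: seq 1 N).
  rewrite lsum_cons, div_INR0_pow by exact Hk. ring. }
unfold Li. destruct l as [l1 l2].
assert (H1 : is_lim_seq (fun N => fst (LiN N ((k, y) :: r))) l1).
{ eapply is_lim_seq_ext; [|exact (lim_fst _ _ H)]. intros N; rewrite Hpartial; reflexivity. }
assert (H2 : is_lim_seq (fun N => snd (LiN N ((k, y) :: r))) l2).
{ eapply is_lim_seq_ext; [|exact (lim_snd _ _ H)]. intros N; rewrite Hpartial; reflexivity. }
rewrite (is_lim_seq_unique _ _ H1), (is_lim_seq_unique _ _ H2). reflexivity.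
Qed.

Lemma Li_nil : Li nil = 1.
Proof. unfold Li. simpl. rewrite !Lim_seq_const. reflexivity. Qed.

Definition sext (p : nat) (x : C) (sigma : nat -> C) (i : nat) : C :=
  if Nat.eqb i (p + 1) then / x else sigma i.

Definition rhs_term (p : nat) (m : nat -> nat) (n : nat) (x : C) (sigma : nat -> C) (j : nat) : C :=
  let s := sext p x sigma in
  (-1) ^ j * zstar n (map (fun i => (m i, s i / s (i + 1)%nat)) (seq 1 j))
  * Li (map (fun i => if Nat.eqb i p then (m p, sigma p * x) else (m i, s i / s (i + 1)%nat))
            (rev (seq (j + 1) (p - j))))
  / denom sigma n p.

Lemma forms_of_blocks (sigma : nat -> C) (m : nat -> nat) l :
  flat_map (fun i => (fun t => / (1 - sigma i * t)) :: repeat (fun t => / t) (m i - 1)) l =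
  map form_fun (flat_map (fun i => Geo (sigma i) :: repeat Inv (m i - 1)) l).
Proof.
induction l as [|a l IH]; [reflexivity|].
simpl. rewrite map_app, <- IH. simpl. rewrite map_repeat. reflexivity.
Qed.

Section Assembly.

Variables (p : nat) (m : nat -> nat) (n : nat) (x : C) (sigma : nat -> C).
Hypothesis Hp : (1 <= p)%nat.
Hypothesis Hm : forall i, (1 <= i <= p)%nat -> (1 <= m i)%nat.
Hypothesis Hn : (1 <= n)%nat.
Hypothesis Hx : (0 < Cmod x <= 1)%R.
Hypothesis Hsig : forall i, (1 <= i <= p)%nat -> (0 < Cmod (sigma i) < 1)%R.

Let s := sext p x sigma.
Let D := denom sigma n p.

Lemma sigma_nz k : (1 <= k <= p)%nat -> sigma k <> 0.
Proof. intros Hk E. specialize (Hsig k Hk). rewrite E, Cmod_0 in Hsig. lra. Qed.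

Lemma denom_nz : D <> 0.
Proof.
apply Cmult_neq_0; [apply Cpow_nz, sigma_nz; lia|].
apply lprod_nz. intros k Hk. apply in_seq in Hk. apply sigma_nz. lia.
Qed.

Lemma lhs_series :
  isC (fun N => RtoC (INR n) * (block_coef sigma m n p N * x ^ N))
    (RtoC (INR n) *
     itint ((fun t => t ^ (n - 1))
            :: flat_map (fun i => (fun t => / (1 - sigma i * t)) :: repeat (fun t => / t) (m i - 1))
                        (seq 1 p)) x).
Proof.
apply isC_scal. rewrite forms_of_blocks, <- (block_coef_fold sigma m n p Hm).
apply (represents_itint n _ Hn); [|apply Hx].
apply Forall_forall. intros f Hf. apply in_flat_map in Hf. destruct Hf as [i [Hi [<-|Hf]]].
- apply in_seq in Hi. apply Hsig. lia.
- apply repeat_spec in Hf. subst f. exact I.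
Qed.

Lemma sext_arg i : (i < p)%nat -> (m i, s i / s (i + 1)%nat) = arg sigma m i.
Proof.
intros Hi. unfold s, sext, arg.
destruct (Nat.eqb_spec i (p + 1)), (Nat.eqb_spec (i + 1) (p + 1)); try lia.
rewrite Nat.add_1_r. reflexivity.
Qed.

Lemma zeta_args_lt j : (j < p)%nat ->
  map (fun i => (m i, s i / s (i + 1)%nat)) (seq 1 j) = zeta_args sigma m j.
Proof. intros Hj. apply map_ext_in. intros i Hi. apply in_seq in Hi. apply sext_arg. lia. Qed.

Lemma zeta_args_full :
  map (fun i => (m i, s i / s (i + 1)%nat)) (seq 1 p)
  = zeta_args sigma m (p - 1) ++ (m p, sigma p * x) :: nil.
Proof.
replace (seq 1 p) with (seq 1 (p - 1) ++ p :: nil)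
  by (destruct p; [lia|]; rewrite seq_S; simpl; rewrite Nat.sub_0_r; reflexivity).
rewrite map_app, zeta_args_lt by lia. f_equal. simpl. unfold s, sext.
destruct (Nat.eqb_spec p (p + 1)); [lia|]. rewrite Nat.eqb_refl.
assert (Hx0 : x <> 0) by (intros E; rewrite E, Cmod_0 in Hx; lra).
replace (sigma p / / x) with (sigma p * x) by (field; exact Hx0). reflexivity.
Qed.

Lemma li_args j : (j < p)%nat ->
  map (fun i => if Nat.eqb i p then (m p, sigma p * x) else (m i, s i / s (i + 1)%nat))
      (rev (seq (j + 1) (p - j)))
  = (m p, sigma p * x) :: li_tail sigma m j p.
Proof.
intros Hj. replace (seq (j + 1) (p - j)) with (seq (S j) (p - 1 - j) ++ p :: nil).
2:{ replace (p - j)%nat with (S (p - 1 - j)) by lia. rewrite seq_S, Nat.add_1_r.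
    replace (S j + (p - 1 - j))%nat with p by lia. reflexivity. }
rewrite rev_app_distr. simpl. rewrite Nat.eqb_refl. f_equal.
unfold li_tail. apply map_ext_in. intros i Hi. apply in_rev, in_seq in Hi.
destruct (Nat.eqb_spec i p); [lia|]. apply sext_arg. lia.
Qed.

Lemma rhs_term_series j : (j < p)%nat ->
  isC (fun N => (-1) ^ j * zstar n (zeta_args sigma m j) * li_term sigma m j p N * x ^ N / D)
      (rhs_term p m n x sigma j).
Proof.
intros Hj. unfold rhs_term. fold s. rewrite zeta_args_lt, li_args by exact Hj.
assert (Hall : forall k, (1 <= k <= p)%nat ->
          sigma k <> 0 /\ (Cmod (sigma k) < 1)%R /\ (1 <= m k)%nat)
  by (intros k Hk; repeat split; [apply sigma_nz | apply Hsig | apply Hm]; exact Hk).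
destruct (abs_sum_series _ x (abs_sum_li_term sigma m p j Hall p ltac:(lia)) (proj2 Hx))
  as [l Hl].
rewrite (Li_series (m p) (sigma p * x) (li_tail sigma m j p) l).
- replace ((-1) ^ j * zstar n (zeta_args sigma m j) * l / denom sigma n p)
    with ((-1) ^ j * zstar n (zeta_args sigma m j) / D * l) by (unfold D, Cdiv; ring).
  eapply isC_ext; [|exact (isC_scal _ _ _ Hl)]. intros N. unfold Cdiv. ring.
- apply Hm. lia.
- eapply isC_ext; [|exact Hl]. intros N. unfold li_term, wterm. rewrite Cpow_mult_l.
  unfold Cdiv. ring.
Qed.

Lemma rhs_term_series_last :
  isC (fun N => (-1) ^ p * (wterm sigma m p N * zLB n (zeta_args sigma m (p - 1)) N) * x ^ N / D)
      (rhs_term p m n x sigma p).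
Proof.
unfold rhs_term. fold s. rewrite Nat.sub_diag. cbn [seq rev map]. rewrite Li_nil.
rewrite zeta_args_full, zstar_zLB, zLB_snoc by exact Hn.
set (a := fun N => (-1) ^ p * (wterm sigma m p N * zLB n (zeta_args sigma m (p - 1)) N) * x ^ N / D).
replace (_ * 1 / denom sigma n p) with (lsum a (seq 0 (S n))).
- apply isC_finite. intros N HN. unfold a. rewrite zLB_vanish by exact HN. unfold Cdiv. ring.
- change (seq 0 (S n)) with (0%nat :: seq 1 n). rewrite lsum_cons.
  unfold a at 1, wterm at 1. rewrite div_INR0_pow by (apply Hm; lia).
  rewrite (lsum_ext_in _ (fun M => ((-1) ^ p * / D) * ((if 1 <=? M then 1 else 0) *
             ((sigma p * x) ^ M / RtoC (INR M) ^ m p * zLB n (zeta_args sigma m (p - 1)) M)))).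
  + rewrite <- lsum_scal. unfold D, Cdiv. ring.
  + intros M HM. apply in_seq in HM. destruct (Nat.leb_spec 1 M); [|lia].
    unfold a, wterm. rewrite Cpow_mult_l. unfold Cdiv. ring.
Qed.

Lemma rhs_series :
  isC (fun N => RtoC (INR n) * (block_coef sigma m n p N * x ^ N))
      (lsum (rhs_term p m n x sigma) (seq 0 (p + 1))).
Proof.
rewrite Nat.add_1_r, seq_S, lsum_app, lsum_cons, lsum_nil, Cplus_0_r.
assert (Hlt := isC_lsum _ _ (seq 0 p)
                 (fun j Hj => rhs_term_series j ltac:(apply in_seq in Hj; lia))).
assert (Hsum := isC_plus _ _ _ _ Hlt rhs_term_series_last).
eapply isC_ext; [|exact Hsum]. intros N. cbv beta.
pose proof (closed_form_all sigma m n p Hn (fun k Hk => conj (sigma_nz k Hk) (Hm k Hk))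
              p (conj Hp (le_n p)) N) as Hcf.
rewrite (lsum_ext_in _ (fun j => ((-1) ^ j * zstar n (zeta_args sigma m j) * li_term sigma m j p N)
                                  * (x ^ N / D))) by (intros; unfold Cdiv; ring).
rewrite <- lsum_scal_r. fold D in Hcf.
set (Lw := lsum (fun j => (-1) ^ j * zstar n (zeta_args sigma m j) * li_term sigma m j p N) (seq 0 p))
  in *.
replace Lw with (RtoC (INR n) * D * block_coef sigma m n p N
                 - (-1) ^ p * (wterm sigma m p N * zLB n (zeta_args sigma m (p - 1)) N))
  by (rewrite Hcf; ring).
field. exact denom_nz.
Qed.

End Assembly.

Theorem mainTheorem2 (p : nat) (m : nat -> nat) (n : nat) (x : C) (sigma : nat -> C) :
  (1 <= p)%nat ->
  (forall i, (1 <= i <= p)%nat -> (1 <= m i)%nat) ->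
  (1 <= n)%nat ->
  (0 < Cmod x <= 1)%R ->
  (forall i, (1 <= i <= p)%nat -> (0 < Cmod (sigma i) < 1)%R) ->
  let s := fun i : nat => if Nat.eqb i (p + 1)%nat then / x else sigma i in
  RtoC (INR n) *
    itint ((fun t => Cpow t (n - 1)%nat)
           :: flat_map (fun i => (fun t => / (1 - sigma i * t))
                                 :: repeat (fun t => / t) (m i - 1)%nat) (seq 1%nat p)) x
  = lsum (fun j =>
        Cpow (-1) j
        * zstar n (map (fun i => (m i, s i / s ((i + 1)%nat))) (seq 1%nat j))
        * Li (map (fun i => if Nat.eqb i p then (m p, sigma p * x)
                            else (m i, s i / s ((i + 1)%nat)))
                  (rev (seq (j + 1)%nat (p - j)%nat)))
        / (Cpow (sigma 1%nat) (n + 1)%nat * lprod sigma (seq 2%nat (p - 1)%nat)))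
      (seq 0%nat (p + 1)%nat).
Proof.
intros Hp Hm Hn Hx Hsig s.
apply (isC_unique (fun N => RtoC (INR n) * (block_coef sigma m n p N * x ^ N))).
- apply lhs_series; assumption.
- exact (rhs_series p m n x sigma Hp Hm Hn Hx Hsig).
Qed.
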